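(* Let $r\ge 3$ and $n\ge\frac{(r-1)(2r+1)}{2}$, and let $\mathcal{H}$ be an $n$-vertex $\mathrm{T}_r$-free $r$-graph with $\delta_{r-1}^{+}(\mathcal{H})>\frac{2n}{2r+1}$. Let $V_1,\ldots,V_r\subseteq V(\mathcal{H})$ be pairwise disjoint sets, each independent in $\mathcal{H}$, with $|V_i|>\frac{2n}{2r+1}$ for all $i\in[r]$, and let $Z=V(\mathcal{H})\setminus(V_1\cup\cdots\cup V_r)$. Let $v\in Z$ and, for $i\in[r]$, let $$L_i=\{e\in L_{\mathcal{H}}(v)\colon |e\cap V_j|=1\text{ for every } j\in[r]\setminus\{i\}\}.$$ Then at most one of the sets $L_1,\ldots,L_r$ is nonempty.
   Context: An $r$-graph $\mathcal{H}$ is a collection of $r$-subsets (edges) of a finite vertex set $V(\mathcal{H})$. The shadow is $\partial\mathcal{H}=\{e\in\binom{V(\mathcal{H})}{r-1}\colon e\subseteq E \text{ for some } E\in\mathcal{H}\}$. For $e\in\partial\mathcal{H}$, $N_{\mathcal{H}}(e)=\{u\in V(\mathcal{H})\colon e\cup\{u\}\in\mathcal{H}\}$. The minimum positive codegree is $\delta_{r-1}^{+}(\mathcal{H})=\min\{|N_{\mathcal{H}}(e)|\colon e\in\partial\mathcal{H}\}$. The link of a vertex $v$ is $L_{\mathcal{H}}(v)=\{e\in\partial\mathcal{H}\colon e\cup\{v\}\in\mathcal{H}\}$. A set $I\subseteq V(\mathcal{H})$ is independent in $\mathcal{H}$ if every edge contains at most one vertex of $I$. The $r$-uniform generalized triangle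 is $\mathrm{T}_r=\{\{1,\ldots,r-1,r\},\{1,\ldots,r-1,r+1\},\{r,r+1,\ldots,2r-1\}\}$; $\mathcal{H}$ is $\mathrm{T}_r$-free if it contains no subhypergraph isomorphic to $\mathrm{T}_r$. *)

From mathcomp Require Import all_boot.

Set Implicit Arguments. Unset Strict Implicit. Unset Printing Implicit Defensive.

Section Hyp.
Variable T : finType.
Implicit Types (H : {set {set T}}) (e E : {set T}) (I : {set T}).

Definition uniform (r : nat) H := forall E, E \in H -> #|E| = r.

Definition shadow (r : nat) H : {set {set T}} :=
  [set e : {set T} | (#|e| == r.-1) && [exists E in H, e \subset E]].

Definition nbhd H e : {set T} := [set u | (e :|: [set u]) \in H].

(* "P (delta^+_{r-1}(H))" for an upward-closed P is expressed as:
   P |N_H(e)| for every e in the shadow (delta^+ is the minimum of these). *)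
Definition mincodeg_sat (r : nat) H (P : nat -> Prop) :=
  forall e, e \in shadow r H -> P #|nbhd H e|.

Definition link (r : nat) H (v : T) : {set {set T}} :=
  [set e in shadow r H | (e :|: [set v]) \in H].

Definition independent H I := forall E, E \in H -> #|E :&: I| <= 1.

(* H contains a copy of the generalized triangle T_r:
   edges A = S+{a}, B = S+{b}, C containing a,b and disjoint from S,
   where S = A :&: B has size r-1. *)
Definition Tr_free (r : nat) H :=
  ~ exists A B C, [/\ [&& A \in H, B \in H & C \in H],
     #|A :&: B| = r.-1,
     (A :\: B) :|: (B :\: A) \subset C &
     C :&: (A :&: B) = set0].
End Hyp.

From mathcomp Require Import all_boot zify.
Set Implicit Arguments. Unset Strict Implicit. Unset Printing Implicit Defensive.

(* Two distinct neighbours u, w of an (r-1)-set S of the shadow never lie in a common edge C: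
   while C meets S, replace a vertex s of C inside S by a neighbour of C - s outside S (one
   exists because codegrees are at least r, which is where the lower bound on n is used);
   once C avoids S, the edges S + u, S + w and C form a copy of T_r.
   Now take e in L_i and f in L_j with i <> j, and put E = e + v. The neighbourhoods of the
   facets E - x (x in e) are then pairwise disjoint, and disjoint from N(e) and N(f), while
   N(e) and N(f) meet only outside V_1, ..., V_r by independence. Hence the union U of the
   N(E - x) satisfies |U| + |N(e)| + |N(f)| + |V_1 + ... + V_r| <= 2n, whereas the codegree
   and size bounds make the left side exceed ((r - 1) + 1 + 1 + r) 2n / (2r + 1) = 2n. *)

Lemma card_bigcup_disjoint (T I : finType) (P : {pred I}) (F : I -> {set T}) :
    {in P &, forall i j, i != j -> [disjoint F i & F j]} ->
  #|\bigcup_(i in P) F i| = \sum_(i in P) #|F i|.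
Proof.
move=> disjF; pose G i := if i \in P then F i else set0.
have disjG i j : i != j -> [disjoint G i & G j].
  rewrite /G; case: ifP => Pi; case: ifP => Pj ij //;
    by [exact: disjF | rewrite -setI_eq0 ?set0I ?setI0].
rewrite big_mkcond -/G /= -sum1_card partition_disjoint_bigcup //= [RHS]big_mkcond.
by apply: eq_bigr => i _; rewrite sum1_card /G; case: ifP; rewrite ?cards0.
Qed.

Lemma mul_card_leq_sum (I : finType) (P : {pred I}) (F : I -> nat) m c :
  (forall i, i \in P -> m <= c * F i) -> #|P| * m <= c * \sum_(i in P) F i.
Proof.
move=> le_mF; rewrite big_distrr -sum_nat_const; exact: leq_sum.
Qed.

Lemma card_cover_twice (T : finType) (A X Y B : {set T}) :
    [disjoint A & X] -> [disjoint A & Y] -> [disjoint X :&: Y & B] ->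
  #|A| + #|X| + #|Y| + #|B| <= 2 * #|T|.
Proof.
move=> dAX dAY dXYB.
have dA : [disjoint A & X :|: Y].
  by rewrite -setI_eq0 setIUr (disjoint_setI0 dAX) (disjoint_setI0 dAY) setU0.
have := cardsUI A (X :|: Y); rewrite (disjoint_setI0 dA) cards0.
have := cardsUI (X :&: Y) B; rewrite (disjoint_setI0 dXYB) cards0.
have := cardsUI X Y.
have := max_card (A :|: (X :|: Y)); have := max_card (X :&: Y :|: B).
lia.
Qed.

Section TrFreeGraph.
Variables (T : finType) (r : nat) (H : {set {set T}}).
Implicit Types (S C W e f : {set T}) (u v w x : T).
Hypotheses (r_gt0 : 0 < r) (H_uniform : uniform r H).

Lemma card_shadow S : S \in shadow r H -> #|S| = r.-1.
Proof. by rewrite inE => /andP[/eqP]. Qed.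

Lemma nbhd_notin S w : #|S| = r.-1 -> w \in nbhd H S -> w \notin S.
Proof.
move=> cardS; rewrite inE => SwH; apply: contraTN SwH => wS.
by apply/negP => /H_uniform; rewrite (setUidPl _) ?sub1set // cardS; lia.
Qed.

Lemma facet_shadow C x : C \in H -> x \in C -> C :\ x \in shadow r H.
Proof.
move=> CH xC; rewrite inE; apply/andP; split.
  by rewrite -(H_uniform CH) (cardsD1 x C) xC.
by apply/existsP; exists C; rewrite CH subD1set.
Qed.

Lemma facet_nbhd C x : C \in H -> x \in C -> x \in nbhd H (C :\ x).
Proof. by move=> CH xC; rewrite inE setUC setD1K. Qed.

Lemma indep_nbhd W S :
  independent H W -> #|S| = r.-1 -> #|S :&: W| = 1 -> [disjoint nbhd H S & W].
Proof.
move=> indepW cardS cardSW; rewrite -setI_eq0; apply/eqP/setP => w.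
rewrite in_setI in_set0; apply/negP => /andP[wN wW].
have wS := nbhd_notin cardS wN; rewrite inE in wN.
have sub : w |: (S :&: W) \subset (S :|: [set w]) :&: W.
  apply/subsetP => x; rewrite !inE.
  by case/orP => [/eqP-> | /andP[-> ->]]; rewrite ?eqxx ?wW ?orbT.
have := subset_leq_card sub; have := indepW _ wN.
by rewrite cardsU1 cardSW inE (negbTE wS) /=; lia.
Qed.

Lemma nbhdI_disjoint_bigcup (I : finType) (V : I -> {set T}) e f i j :
    (forall k, independent H (V k)) -> #|e| = r.-1 -> #|f| = r.-1 -> i != j ->
    [forall k, (k != i) ==> (#|e :&: V k| == 1)] ->
    [forall k, (k != j) ==> (#|f :&: V k| == 1)] ->
  [disjoint nbhd H e :&: nbhd H f & \bigcup_k V k].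
Proof.
move=> indepV cardE cardF neq_ij /forallP eV /forallP fV.
apply: bigcup_disjoint => k _; have [-> | neq_ki] := eqVneq k i.
  apply: disjointWl (subsetIr _ _) _.
  by apply: indep_nbhd cardF _ => //; apply/eqP; have := fV i; rewrite neq_ij.
apply: disjointWl (subsetIl _ _) _.
by apply: indep_nbhd cardE _ => //; apply/eqP; have := eV k; rewrite neq_ki.
Qed.

Hypotheses (H_Trfree : Tr_free r H)
  (H_codeg : forall S, S \in shadow r H -> r <= #|nbhd H S|).

Lemma nbhd_notsubset S D : #|S| < r -> D \in shadow r H -> ~~ (nbhd H D \subset S).
Proof.
move=> ltSr /H_codeg; apply: contraTN => /subset_leq_card; lia.
Qed.

Section NbhdPair.
Variables (S : {set T}) (u w : T).
Hypotheses (S_shadow : S \in shadow r H) (uN : u \in nbhd H S) (wN : w \in nbhd H S)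
  (neq_uw : u != w).

Let cardS : #|S| = r.-1. Proof. exact: card_shadow. Qed.
Let uS : u \notin S. Proof. exact: nbhd_notin uN. Qed.
Let wS : w \notin S. Proof. exact: nbhd_notin wN. Qed.

Lemma nbhd_pair_notin_disjoint_edge C :
  C \in H -> [disjoint C & S] -> u \in C -> w \notin C.
Proof.
move=> CH dCS uC; apply/negP => wC; apply: H_Trfree.
exists (S :|: [set u]), (S :|: [set w]), C.
have -> : (S :|: [set u]) :&: (S :|: [set w]) = S.
  apply/setP => x; rewrite !inE; case: (x \in S) => //=.
  by apply/negP => /andP[/eqP-> ]; rewrite (negbTE neq_uw).
split => //; last by rewrite (disjoint_setI0 dCS).
  by move: uN wN; rewrite !inE CH andbT => -> ->.
apply/subsetP => x; rewrite !inE.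
by case: (x \in S) => //= /orP[] /andP[_ /eqP->].
Qed.

Lemma nbhd_pair_notin_edge C : C \in H -> u \in C -> w \notin C.
Proof.
have [k] := ubnP #|C :&: S|; elim: k C => // k IHk C ltCSk CH uC.
have [dCS | ] := boolP [disjoint C & S]; first exact: nbhd_pair_notin_disjoint_edge.
rewrite -setI_eq0 => /set0Pn[s]; rewrite inE => /andP[sC sS].
have /subsetPn[z zN zS] : ~~ (nbhd H (C :\ s) \subset S).
  by apply: nbhd_notsubset; [rewrite cardS; lia | exact: facet_shadow].
have us : u != s by apply: contraNneq uS => ->.
have ws : w != s by apply: contraNneq wS => ->.
have C'H : (C :\ s) :|: [set z] \in H by rewrite inE in zN.
have ltC'S : #|((C :\ s) :|: [set z]) :&: S| < k.
  rewrite -ltnS; apply: leq_trans ltCSk; rewrite ltnS.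
  apply: proper_card; apply/properP; split.
    apply/subsetP => x; rewrite !inE.
    by case/andP => /orP[/andP[_ ->] // | /eqP-> zS']; rewrite zS' in zS.
  by exists s; rewrite !inE ?sC ?sS ?eqxx //= andbT; apply: contraNneq zS => <-.
apply: contraNN (IHk _ ltC'S C'H _) => [wC|]; by rewrite !inE ?us ?ws ?uC ?wC.
Qed.

End NbhdPair.

Lemma facet_nbhd_disjoint E S v x :
    E \in H -> S \in shadow r H -> v \in nbhd H S -> v \in E -> x \in E -> x != v ->
  [disjoint nbhd H (E :\ x) & nbhd H S].
Proof.
move=> EH S_shadow vN vE xE neq_xv; rewrite -setI_eq0; apply/set0Pn => -[w].
rewrite inE => /andP[wNx wN].
have wEx := nbhd_notin (card_shadow (facet_shadow EH xE)) wNx.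
have vEx : v \in E :\ x by rewrite in_setD1 eq_sym neq_xv.
have neq_vw : v != w by apply: contraNneq wEx => <-.
have CH : (E :\ x) :|: [set w] \in H by rewrite inE in wNx.
have vC : v \in (E :\ x) :|: [set w] by rewrite in_setU vEx.
have wC : w \in (E :\ x) :|: [set w] by rewrite in_setU set11 orbT.
by rewrite (negbTE (nbhd_pair_notin_edge S_shadow vN wN neq_vw CH vC)) in wC.
Qed.

Definition facet_nbhds e v := \bigcup_(x in e) nbhd H ((e :|: [set v]) :\ x).

Lemma card_facet_nbhds e v : e :|: [set v] \in H ->
  #|facet_nbhds e v| = \sum_(x in e) #|nbhd H ((e :|: [set v]) :\ x)|.
Proof.
move=> EH; apply: card_bigcup_disjoint => x y xe ye neq_xy.
have yE : y \in e :|: [set v] by rewrite in_setU ye.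
have xE : x \in e :|: [set v] by rewrite in_setU xe.
exact: facet_nbhd_disjoint EH (facet_shadow EH yE) (facet_nbhd EH yE) yE xE neq_xy.
Qed.

Lemma facet_nbhds_disjoint e v S : e :|: [set v] \in H -> v \notin e ->
  S \in shadow r H -> v \in nbhd H S -> [disjoint facet_nbhds e v & nbhd H S].
Proof.
move=> EH ve S_shadow vN; rewrite disjoint_sym; apply/bigcup_disjoint => x xe.
rewrite disjoint_sym; apply: facet_nbhd_disjoint EH S_shadow vN _ _ _.
- by rewrite in_setU set11 orbT.
- by rewrite in_setU xe.
- by apply: contraNneq ve => <-.
Qed.

End TrFreeGraph.

Theorem claim2p5 (T : finType) (r : nat) (H : {set {set T}})
    (V : 'I_r -> {set T}) (v : T) :
  3 <= r ->
  (r - 1) * (2 * r + 1) <= 2 * #|T| ->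
  uniform r H ->
  Tr_free r H ->
  mincodeg_sat r H (fun d => 2 * #|T| < (2 * r + 1) * d) ->
  (forall i j, i != j -> [disjoint V i & V j]) ->
  (forall i, independent H (V i)) ->
  (forall i, 2 * #|T| < (2 * r + 1) * #|V i|) ->
  v \in ~: (\bigcup_i V i) ->
  let L := fun i : 'I_r =>
    [set e in link r H v | [forall j, (j != i) ==> (#|e :&: V j| == 1)]] in
  forall i j, L i != set0 -> L j != set0 -> i = j.
Proof.
move=> r_ge3 n_large H_unif H_Trfree H_codeg disjV indepV bigV _ L i j.
set n := #|T| in n_large H_codeg bigV *.
have r_gt0 : 0 < r by lia.
have codeg_ge_r S : S \in shadow r H -> r <= #|nbhd H S|.
  by move=> /H_codeg/(leq_ltn_trans n_large); rewrite mulnC ltn_mul2l; lia.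
case: (eqVneq i j) => // neq_ij; rewrite /L => /set0Pn-[e eL] /set0Pn-[f fL].
move: eL fL => /setIdP[/setIdP[eS eH] eV] /setIdP[/setIdP[fS fH] fV].
have vNe : v \in nbhd H e by rewrite inE.
have vNf : v \in nbhd H f by rewrite inE.
have ve : v \notin e := nbhd_notin r_gt0 H_unif (card_shadow eS) vNe.
pose A := facet_nbhds H e v; pose B := \bigcup_k V k.
have disjA S : S \in shadow r H -> v \in nbhd H S -> [disjoint A & nbhd H S].
  exact: facet_nbhds_disjoint.
have disjB : [disjoint nbhd H e :&: nbhd H f & B].
  exact: nbhdI_disjoint_bigcup (card_shadow eS) (card_shadow fS) neq_ij eV fV.
have lbA : (r - 1) * (2 * n).+1 <= (2 * r + 1) * #|A|.
  rewrite (card_facet_nbhds r_gt0 H_unif H_Trfree codeg_ge_r eH) subn1 -(card_shadow eS).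
  apply: mul_card_leq_sum => x xe; apply/H_codeg/(facet_shadow H_unif eH).
  by rewrite in_setU xe.
have lbB : r * (2 * n).+1 <= (2 * r + 1) * #|B|.
  rewrite card_bigcup_disjoint => [|k l _ _]; last exact: disjV.
  by rewrite -{1}(card_ord r); apply: mul_card_leq_sum => k _; apply: bigV.
have := card_cover_twice (disjA e eS vNe) (disjA f fS vNf) disjB.
rewrite -/n -(leq_pmul2l (_ : 0 < 2 * r + 1)) ?addn1 // !mulnDr.
have := H_codeg e eS; have := H_codeg f fS; nia.
Qed.
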